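(* Fix $\alpha\in(0,\pi/4]$ and let ALG be any deterministic online algorithm. Then $\rho(\mathrm{ALG};\alpha)\ge\rho^*$, where $$\rho^*=\frac{s^*(1+s^* )\sqrt{1-\cos(4\alpha)}}{\sqrt{2(1+(s^* )^4)-4(s^* )^2\cos(4\alpha)}},$$ $$s^*=-\tfrac12\cos(4\alpha)+\tfrac12\sqrt{\cos^2(4\alpha)-\frac{8\sqrt[3]{2}\sin^2(2\alpha)}{h}+\frac{h}{3\sqrt[3]{2}}}+\tfrac12\sqrt{2\cos^2(4\alpha)+\frac{8\sqrt[3]{2}\sin^2(2\alpha)}{h}+\frac{16-8\cos^3(4\alpha)}{4\sqrt{\cos^2(4\alpha)-\frac{8\sqrt[3]{2}\sin^2(2\alpha)}{h}+\frac{h}{3\sqrt[3]{2}}}}-\frac{h}{3\sqrt[3]{2}}},$$ $$h=\sqrt[3]{-108\cos^2(4\alpha)+\sqrt{(108-108\cos^2(4\alpha))^2-4(12\cos(4\alpha)-12)^3}+108}.$$ In particular, ALG cannot obtain a ratio better than $\rho^*$ on all prefixes of the request sequence $X_0=(0,0)$, $X_i=(2(-s)^{i-1},0)$ ($i\ge1$) with $s=s^*$.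
   Context: Online drone coverage on a line. A drone has a fixed half angle-of-view $\alpha\in(0,\pi/2)$. A drone at a point $T=(t_x,t_y)$ with $t_y\ge 0$ covers the segment $[t_x-t_y\tan\alpha,\ t_x+t_y\tan\alpha]$ of the $x$-axis. For a point $X=(x,0)$ its feasibility cone is $\mathrm{FC}(X)=\{(u,v): v\ge 0,\ |u-x|\le v\tan\alpha\}$, and the feasibility cone of a finite set of points is the intersection of their cones. An input is a finite sequence of points $X_0=(0,0),X_1,\dots,X_n$ ($n\ge1$) on the $x$-axis, revealed one at a time. A solution is a sequence of drone positions $P_0=(0,0),P_1,\dots,P_n$ with $P_i\in\mathrm{FC}(X_0,\dots,X_i)$; its cost is $\sum_{i=0}^{n-1}|P_iP_{i+1}|$. A deterministic online algorithm chooses $P_i$ knowing only $X_0,\dots,X_i$ (it does not know $n$). $\mathrm{OPT}(\mathbf X;\alpha)$ is the minimum cost of a solution when the whole input is known in advance. The competitive ratio $\rho(\mathrm{ALG};\alpha)$ is the supremum over inputs of $\mathrm{ALG}(\mathbf X;\alpha)/\mathrm{OPT}(\mathbf X;\alpha)$. *)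

From Stdlib Require Import Reals Lra List.
From Coquelicot Require Import Coquelicot.
Open Scope R_scope.

(* real cube root (sign-symmetric; the paper only uses it on positive args) *)
Definition cbrt (x : R) : R :=
  if Rlt_dec 0 x then Rpower x (1/3)
  else if Rlt_dec x 0 then - Rpower (- x) (1/3) else 0.

Definition dist2 (P Q : R * R) : R :=
  sqrt ((fst P - fst Q)^2 + (snd P - snd Q)^2).

Definition in_FC (alpha x : R) (T : R * R) : Prop :=
  0 <= snd T /\ Rabs (fst T - x) <= snd T * tan alpha.

(* An input is X_0 = (0,0) followed by X_1,...,X_n; we store the list
   xs = [x_1; ...; x_n] of x-coordinates (n = length xs).
   X xs j is the x-coordinate of X_j. *)
Definition Xc (xs : list R) (j : nat) : R :=
  match j with O => 0 | S k => nth k xs 0 end.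

Definition in_FC_upto (alpha : R) (xs : list R) (i : nat) (T : R * R) : Prop :=
  forall j, (j <= i)%nat -> in_FC alpha (Xc xs j) T.

Fixpoint path_cost (P : nat -> R * R) (n : nat) : R :=
  match n with
  | O => 0
  | S k => path_cost P k + dist2 (P k) (P (S k))
  end.

Definition feasible (alpha : R) (xs : list R) (P : nat -> R * R) : Prop :=
  P O = (0, 0) /\
  forall i, (1 <= i <= length xs)%nat -> in_FC_upto alpha xs i (P i).

Definition OPT (alpha : R) (xs : list R) : R :=
  real (Glb_Rbar (fun c => exists P, feasible alpha xs P /\
                                     c = path_cost P (length xs))).

(* A deterministic online algorithm: maps the revealed prefix
   [x_1; ...; x_i] (i >= 1; X_0 = (0,0) is implicit) to the position P_i.
   Since it is a function of the prefix only, it does not know n. *)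
Definition online_alg := list R -> R * R.

Definition valid_alg (alpha : R) (alg : online_alg) : Prop :=
  forall ys : list R, ys <> nil -> in_FC_upto alpha ys (length ys) (alg ys).

Definition alg_positions (alg : online_alg) (xs : list R) (i : nat) : R * R :=
  match i with O => (0, 0) | S _ => alg (firstn i xs) end.

Definition ALG_cost (alg : online_alg) (xs : list R) : R :=
  path_cost (alg_positions alg xs) (length xs).

(* competitive ratio: sup over inputs (n >= 1) of ALG/OPT; inputs with
   OPT = 0 (ratio undefined) are excluded *)
Definition comp_ratio (alpha : R) (alg : online_alg) : Rbar :=
  Lub_Rbar (fun r => exists xs : list R, (1 <= length xs)%nat /\
              0 < OPT alpha xs /\ r = ALG_cost alg xs / OPT alpha xs).

Definition h_const (alpha : R) : R :=
  let c := cos (4 * alpha) in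
  cbrt (-108 * c^2 + sqrt ((108 - 108 * c^2)^2 - 4 * (12 * c - 12)^3) + 108).

Definition s_star (alpha : R) : R :=
  let c := cos (4 * alpha) in
  let h := h_const alpha in
  let k := cbrt 2 in
  let A := sqrt (c^2 - 8 * k * (sin (2 * alpha))^2 / h + h / (3 * k)) in
  - (1/2) * c + (1/2) * A
  + (1/2) * sqrt (2 * c^2 + 8 * k * (sin (2 * alpha))^2 / h
                  + (16 - 8 * c^3) / (4 * A) - h / (3 * k)).

Definition rho_star (alpha : R) : R :=
  let s := s_star alpha in
  let c := cos (4 * alpha) in
  s * (1 + s) * sqrt (1 - c) / sqrt (2 * (1 + s^4) - 4 * s^2 * c).

Definition adv_prefix (s : R) (n : nat) : list R :=
  map (fun k => 2 * (- s)^k) (seq 0 n).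

From Stdlib Require Import Reals Lra Lia Psatz List.
From Coquelicot Require Import Coquelicot.
Open Scope R_scope.

(* Fix s > 1 and t = tan alpha.  After n+2 requests of the zigzag X_i = 2(-s)^(i-1)
   the last two requests are 2(-1)^n s^n and -2(-1)^n s^(n+1), and every earlier one
   lies between them, so OPT is at most the distance s^n K, K = |(s-1, (s+1)/t)|, to
   the apex of their common cone.  ALG's position (x_n, y_n) must lie in that cone too.
   Charging ALG's next move against the unit vector ((-1)^n (s-1), (s+1) t) / W,
   W = |(s-1, (s+1) t)|, shows that the potential
     Phi_n = cost_n + ((s-1) (-1)^n x_n - (s+1) t y_n) / W
   satisfies Phi_(n+1) >= s Phi_n + (2s(s+1)(s-1)/W - (s-1) C) s^n as soon as
   cost_n <= C s^n, while Phi_n <= C s^n; so C >= 2s(s+1)/W, and the competitive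
   ratio is at least 2s(s+1)/(W K), which is the trigonometric expression of rho(s).
   For s <= 1 this expression is at most 1 <= ALG/OPT. *)

Lemma dist2_nonneg (P Q : R * R) : 0 <= dist2 P Q.
Proof. apply sqrt_pos. Qed.

Lemma dist2_ge_inner (u1 u2 : R) (P Q : R * R) :
  u1 ^ 2 + u2 ^ 2 <= 1 ->
  u1 * (fst Q - fst P) + u2 * (snd Q - snd P) <= dist2 P Q.
Proof.
  intros Hu.
  pose proof (sqrt_cauchy u1 u2 (fst Q - fst P) (snd Q - snd P)) as Hcs.
  replace ((fst Q - fst P)² + (snd Q - snd P)²)
    with ((fst P - fst Q) ^ 2 + (snd P - snd Q) ^ 2) in Hcs by (unfold Rsqr; ring).
  fold (dist2 P Q) in Hcs.
  assert (Hu' : sqrt (u1² + u2²) <= 1).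
  { rewrite <- sqrt_1. apply sqrt_le_1_alt. unfold Rsqr. lra. }
  pose proof (dist2_nonneg P Q). pose proof (sqrt_pos (u1² + u2²)). nra.
Qed.

Lemma path_cost_nonneg (P : nat -> R * R) (n : nat) : 0 <= path_cost P n.
Proof.
  induction n as [|n IH]; simpl; [lra|].
  pose proof (dist2_nonneg (P n) (P (S n))). lra.
Qed.

Lemma path_cost_ge_inner (u1 u2 : R) (P : nat -> R * R) (n : nat) :
  u1 ^ 2 + u2 ^ 2 <= 1 ->
  u1 * (fst (P n) - fst (P O)) + u2 * (snd (P n) - snd (P O)) <= path_cost P n.
Proof.
  intros Hu. induction n as [|n IH]; simpl; [lra|].
  pose proof (dist2_ge_inner u1 u2 (P n) (P (S n)) Hu). lra.
Qed.

Lemma path_cost_ext (P Q : nat -> R * R) (n : nat) :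
  (forall i, (i <= n)%nat -> P i = Q i) -> path_cost P n = path_cost Q n.
Proof.
  induction n as [|n IH]; intros H; simpl; [reflexivity|].
  rewrite IH by (intros i Hi; apply H; lia).
  rewrite (H n), (H (S n)) by lia. reflexivity.
Qed.

Lemma path_cost_single_move (T : R * R) (P : nat -> R * R) (n : nat) :
  (1 <= n)%nat -> (forall i, (1 <= i)%nat -> P i = T) ->
  path_cost P n = dist2 (P O) T.
Proof.
  intros Hn H. induction n as [|[|n] IH]; [lia | |].
  - simpl. rewrite (H 1%nat) by lia. ring.
  - simpl path_cost. simpl in IH. rewrite IH, (H (S n)), (H (S (S n))) by lia.
    unfold dist2. replace ((fst T - fst T) ^ 2 + (snd T - snd T) ^ 2) with 0 by ring.
    rewrite sqrt_0. ring.
Qed.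

Lemma real_Glb_Rbar_bounds (E : R -> Prop) (g c0 : R) :
  E c0 -> (forall c, E c -> g <= c) ->
  g <= real (Glb_Rbar E) /\ (forall c, E c -> real (Glb_Rbar E) <= c).
Proof.
  intros H0 Hlb. destruct (Glb_Rbar_correct E) as [Hl Hg].
  assert (Hb : Rbar_le g (Glb_Rbar E)) by (apply Hg; intros c Hc; apply Hlb, Hc).
  pose proof (Hl c0 H0) as Hc0.
  destruct (Glb_Rbar E) as [r| |]; simpl in *; try contradiction.
  split; [exact Hb | intros c Hc; exact (Hl c Hc)].
Qed.

Lemma OPT_le_cost (alpha : R) (xs : list R) (P : nat -> R * R) :
  feasible alpha xs P -> OPT alpha xs <= path_cost P (length xs).
Proof.
  intros HP. unfold OPT.
  apply (real_Glb_Rbar_bounds _ 0 (path_cost P (length xs))).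
  - exists P. auto.
  - intros c [Q [_ ->]]. apply path_cost_nonneg.
  - exists P. auto.
Qed.

Lemma OPT_ge (alpha : R) (xs : list R) (g : R) :
  (exists P, feasible alpha xs P) ->
  (forall P, feasible alpha xs P -> g <= path_cost P (length xs)) ->
  g <= OPT alpha xs.
Proof.
  intros [P HP] Hg. unfold OPT.
  apply (real_Glb_Rbar_bounds _ g (path_cost P (length xs))).
  - exists P. auto.
  - intros c [Q [HQ ->]]. apply Hg, HQ.
Qed.

Lemma feasible_spread_le_cost (alpha : R) (xs : list R) (P : nat -> R * R) (j k : nat) :
  0 < tan alpha -> feasible alpha xs P -> (1 <= length xs)%nat ->
  (j <= length xs)%nat -> (k <= length xs)%nat ->
  Rabs (Xc xs j - Xc xs k) <= 2 * tan alpha * path_cost P (length xs).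
Proof.
  intros Ht [HP0 HP] HN Hj Hk. set (N := length xs) in *.
  destruct (HP N (conj HN (le_n N)) j Hj) as [_ Hxj].
  destruct (HP N (conj HN (le_n N)) k Hk) as [_ Hxk].
  pose proof (path_cost_ge_inner 0 1 P N ltac:(lra)) as Hheight.
  rewrite HP0 in Hheight. simpl in Hheight.
  replace (Xc xs j - Xc xs k) with ((fst (P N) - Xc xs k) - (fst (P N) - Xc xs j)) by ring.
  eapply Rle_trans; [apply Rabs_triang|]. rewrite Rabs_Ropp. nra.
Qed.

Lemma OPT_le_cover (alpha : R) (xs : list R) (m r : R) :
  0 < tan alpha -> (1 <= length xs)%nat ->
  (forall j, (j <= length xs)%nat -> Rabs (Xc xs j - m) <= r) ->
  OPT alpha xs <= sqrt (m ^ 2 + (r / tan alpha) ^ 2).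
Proof.
  intros Ht HN Hcover.
  assert (Hr : 0 <= r) by (eapply Rle_trans; [apply Rabs_pos | apply (Hcover O); lia]).
  set (T := (m, r / tan alpha)).
  set (Q := fun i : nat => match i with O => (0, 0) | S _ => T end).
  assert (HQ : feasible alpha xs Q).
  { split; [reflexivity|]. intros [|i] Hi j Hj; [lia|]. split; simpl.
    - apply Rdiv_le_0_compat; lra.
    - replace (r / tan alpha * tan alpha) with r by (field; lra).
      rewrite Rabs_minus_sym. apply Hcover. lia. }
  eapply Rle_trans; [apply (OPT_le_cost _ _ _ HQ)|].
  rewrite (path_cost_single_move T); [| exact HN | intros [|i] Hi; [lia | reflexivity]].
  unfold dist2. simpl. right. f_equal. ring.
Qed.

Lemma Xc_firstn (xs : list R) (i j : nat) : (j <= i)%nat -> Xc (firstn i xs) j = Xc xs j.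
Proof.
  intros H. destruct j as [|k]; simpl; [reflexivity|].
  rewrite nth_firstn. destruct (Nat.ltb_spec k i); [reflexivity | lia].
Qed.

Lemma alg_positions_feasible (alpha : R) (alg : online_alg) (xs : list R) :
  valid_alg alpha alg -> feasible alpha xs (alg_positions alg xs).
Proof.
  intros Hv. split; [reflexivity|].
  intros [|i] Hi; [lia|]. simpl alg_positions.
  assert (Hne : firstn (S i) xs <> nil) by (destruct xs; simpl in *; [lia | discriminate]).
  pose proof (Hv _ Hne) as H. rewrite length_firstn, Nat.min_l in H by lia.
  intros j Hj. rewrite <- (Xc_firstn xs (S i) j Hj). apply H, Hj.
Qed.

Lemma OPT_le_ALG_cost (alpha : R) (alg : online_alg) (xs : list R) :
  valid_alg alpha alg -> OPT alpha xs <= ALG_cost alg xs.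
Proof. intros Hv. apply OPT_le_cost, alg_positions_feasible, Hv. Qed.

Lemma pow_opp_sign (s : R) (n : nat) : (- s) ^ n = (-1) ^ n * s ^ n.
Proof. rewrite <- Rpow_mult_distr. f_equal. ring. Qed.

Lemma sign_cases (n : nat) : (-1) ^ n = 1 \/ (-1) ^ n = -1.
Proof.
  induction n as [|n [E|E]]; simpl; [left; ring | right | left]; rewrite E; ring.
Qed.

Lemma sign_sq (n : nat) : ((-1) ^ n) ^ 2 = 1.
Proof. destruct (sign_cases n) as [E|E]; rewrite E; ring. Qed.

Lemma adv_prefix_length (s : R) (n : nat) : length (adv_prefix s n) = n.
Proof. unfold adv_prefix. rewrite length_map, length_seq. reflexivity. Qed.

Lemma adv_prefix_Xc (s : R) (N k : nat) :
  (k < N)%nat -> Xc (adv_prefix s N) (S k) = 2 * (-1) ^ k * s ^ k.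
Proof.
  intros Hk. simpl. unfold adv_prefix.
  rewrite nth_indep with (d' := 2 * (- s) ^ 0) by (rewrite length_map, length_seq; exact Hk).
  rewrite (map_nth (fun k => 2 * (- s) ^ k)), seq_nth, pow_opp_sign by exact Hk.
  simpl. ring.
Qed.

Lemma adv_prefix_firstn (s : R) (N i : nat) :
  (i <= N)%nat -> firstn i (adv_prefix s N) = adv_prefix s i.
Proof.
  intros H. unfold adv_prefix. rewrite firstn_map. f_equal.
  replace N with (i + (N - i))%nat by lia.
  rewrite seq_app, firstn_app, length_seq, Nat.sub_diag, firstn_O, app_nil_r.
  apply firstn_all2. rewrite length_seq. lia.
Qed.

Definition adv_positions (alg : online_alg) (s : R) (n : nat) : R * R :=
  match n with O => (0, 0) | S _ => alg (adv_prefix s n) end.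

Lemma ALG_cost_adv_prefix (alg : online_alg) (s : R) (N : nat) :
  ALG_cost alg (adv_prefix s N) = path_cost (adv_positions alg s) N.
Proof.
  unfold ALG_cost. rewrite adv_prefix_length. apply path_cost_ext.
  intros [|k] Hk; simpl; [reflexivity|].
  rewrite <- (adv_prefix_firstn s N (S k)) by exact Hk. reflexivity.
Qed.

Lemma adv_positions_in_FC (alpha : R) (alg : online_alg) (s : R) (n j : nat) :
  valid_alg alpha alg -> (1 <= n)%nat -> (j <= n)%nat ->
  in_FC alpha (Xc (adv_prefix s n) j) (adv_positions alg s n).
Proof.
  intros Hv Hn Hj. destruct n as [|n]; [lia|].
  assert (Hne : adv_prefix s (S n) <> nil).
  { intros H. pose proof (adv_prefix_length s (S n)) as L. rewrite H in L. discriminate. }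
  pose proof (Hv _ Hne) as H. rewrite adv_prefix_length in H. apply H, Hj.
Qed.

Lemma OPT_adv_prefix_pos (alpha : R) (alg : online_alg) (s : R) (N : nat) :
  0 < tan alpha -> valid_alg alpha alg -> (1 <= N)%nat -> 0 < OPT alpha (adv_prefix s N).
Proof.
  intros Ht Hv HN.
  apply Rlt_le_trans with (Rabs (Xc (adv_prefix s N) 1 - Xc (adv_prefix s N) 0) / (2 * tan alpha)).
  - rewrite adv_prefix_Xc by lia. simpl.
    replace (2 * 1 * 1 - 0) with 2 by ring. rewrite Rabs_pos_eq by lra.
    apply Rdiv_lt_0_compat; lra.
  - apply OPT_ge; [exists (alg_positions alg (adv_prefix s N)); apply alg_positions_feasible, Hv|].
    intros P HP. apply Rle_div_l; [lra|]. rewrite Rmult_comm.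
    apply feasible_spread_le_cost; auto; rewrite adv_prefix_length; lia.
Qed.

Lemma OPT_adv_prefix_le (alpha s : R) (n : nat) :
  0 < tan alpha -> 1 < s ->
  OPT alpha (adv_prefix s (n + 2)) <= s ^ n * sqrt ((s - 1) ^ 2 + ((s + 1) / tan alpha) ^ 2).
Proof.
  intros Ht Hs. pose proof (pow_lt s n ltac:(lra)) as Hsn.
  eapply Rle_trans.
  (* midpoint and half-distance of the last two requests *)
  { apply (OPT_le_cover alpha _ ((-1) ^ n * s ^ n * (1 - s)) (s ^ n * (1 + s)) Ht).
    - rewrite adv_prefix_length. lia.
    - rewrite adv_prefix_length. intros j Hj. apply Rabs_le.
      destruct j as [|k].
      + simpl. destruct (sign_cases n) as [E|E]; rewrite E; split; nra.
      + rewrite adv_prefix_Xc by lia.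
        destruct (Nat.eq_dec k (S n)) as [->|Hkn].
        * simpl. destruct (sign_cases n) as [E|E]; rewrite E; split; nra.
        * pose proof (Rle_pow s k n ltac:(lra) ltac:(lia)) as Hsk.
          pose proof (pow_lt s k ltac:(lra)) as Hsk0.
          destruct (sign_cases k) as [E|E], (sign_cases n) as [E'|E'];
            rewrite E, E'; split; nra. }
  right.
  replace (((-1) ^ n * s ^ n * (1 - s)) ^ 2 + (s ^ n * (1 + s) / tan alpha) ^ 2)
    with ((s ^ n) ^ 2 * ((s - 1) ^ 2 + ((s + 1) / tan alpha) ^ 2)).
  - rewrite sqrt_mult_alt, sqrt_pow2 by (try apply pow2_ge_0; lra). reflexivity.
  - replace (((-1) ^ n * s ^ n * (1 - s)) ^ 2) with (((-1) ^ n) ^ 2 * (s ^ n) ^ 2 * (1 - s) ^ 2) by ring.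
    rewrite sign_sq. field. lra.
Qed.

Lemma growth_bounded_nonpos (psi : nat -> R) (delta B : R) :
  (forall n, psi n + delta <= psi (S n)) -> (forall n, psi n <= B) -> delta <= 0.
Proof.
  intros Hinc Hbd. destruct (Rle_dec delta 0) as [|Hd]; [assumption|]. exfalso.
  assert (Hlin : forall n, psi O + INR n * delta <= psi n).
  { induction n as [|n IH]; [simpl; lra|]. rewrite S_INR. pose proof (Hinc n). lra. }
  destruct (INR_archimed delta (B - psi O)) as [n Hn]; [lra|].
  pose proof (Hlin n). pose proof (Hbd n). lra.
Qed.

Section ZigzagPotential.

Variables (s t ux uy C : R) (a b A : nat -> R).
Hypothesis Hs : 1 < s.
Hypothesis Ht : 0 <= t.
Hypothesis Hux : 0 <= ux.
Hypothesis Hu : (s - 1) * uy = (s + 1) * t * ux.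
Hypothesis Hstep : forall n, A n - ux * (a (S n) + a n) + uy * (b (S n) - b n) <= A (S n).
Hypothesis Hfar : forall n, a n + 2 * s ^ S n <= t * b n.
Hypothesis Hb : forall n, 0 <= b n.
Hypothesis HA : forall n, A n <= C * s ^ n.

Let Phi (n : nat) : R := A n + ux * a n - uy * b n.

Lemma potential_step (n : nat) :
  s * Phi n + (2 * s * (s + 1) * ux - (s - 1) * C) * s ^ n <= Phi (S n).
Proof.
  unfold Phi. pose proof (Hstep n). pose proof (Hfar n). pose proof (HA n).
  assert (Hub : (s - 1) * uy * b n = (s + 1) * t * ux * b n) by (rewrite Hu; ring).
  assert (0 <= (s - 1) * (C * s ^ n - A n)) by (apply Rmult_le_pos; lra).
  assert (0 <= (s + 1) * ux * (t * b n - a n - 2 * s ^ S n)) by (apply Rmult_le_pos; nra).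
  simpl in *. nra.
Qed.

Lemma potential_le (n : nat) : Phi n <= C * s ^ n.
Proof.
  unfold Phi. pose proof (Hfar n). pose proof (Hb n). pose proof (HA n).
  pose proof (pow_lt s (S n) ltac:(lra)).
  assert (Htu : t * ux <= uy) by nra.
  assert (ux * a n <= ux * (t * b n)) by (apply Rmult_le_compat_l; lra).
  nra.
Qed.

Lemma zigzag_cost_bound : 2 * s * (s + 1) * ux <= (s - 1) * C.
Proof.
  set (delta := 2 * s * (s + 1) * ux - (s - 1) * C).
  assert (Hpow : forall n, 0 < s ^ n) by (intros; apply pow_lt; lra).
  assert (delta / s <= 0).
  { apply (growth_bounded_nonpos (fun n => Phi n / s ^ n) (delta / s) C).
    - intros n. pose proof (potential_step n) as Hn. pose proof (Hpow n).
      replace (Phi n / s ^ n + delta / s) with ((s * Phi n + delta * s ^ n) / s ^ S n)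
        by (simpl; field; lra).
      apply Rmult_le_compat_r; [left; apply Rinv_0_lt_compat, Hpow | exact Hn].
    - intros n. apply Rle_div_l; [apply Hpow | apply potential_le]. }
  assert (delta <= 0) by (apply Rle_div_l in H; lra).
  unfold delta in *. lra.
Qed.

End ZigzagPotential.

Lemma adv_cost_lower_bound (alpha : R) (alg : online_alg) (s C : R) :
  0 < tan alpha -> valid_alg alpha alg -> 1 < s ->
  (forall n, path_cost (adv_positions alg s) (n + 2) <= C * s ^ n) ->
  2 * s * (s + 1) <= C * sqrt ((s - 1) ^ 2 + ((s + 1) * tan alpha) ^ 2).
Proof.
  intros Ht Hv Hs Hcost.
  set (t := tan alpha) in *.
  set (W := sqrt ((s - 1) ^ 2 + ((s + 1) * t) ^ 2)).
  set (P := adv_positions alg s).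
  assert (HW : 0 < W) by (apply sqrt_lt_R0; nra).
  assert (HW2 : W ^ 2 = (s - 1) ^ 2 + ((s + 1) * t) ^ 2) by (apply pow2_sqrt; nra).
  set (ux := (s - 1) / W). set (uy := (s + 1) * t / W).
  assert (Hunit : ux ^ 2 + uy ^ 2 = 1).
  { unfold ux, uy. transitivity (((s - 1) ^ 2 + ((s + 1) * t) ^ 2) / W ^ 2).
    - field. lra.
    - rewrite <- HW2. field. lra. }
  assert (Hfc : forall n j, (j <= n + 2)%nat -> in_FC alpha (Xc (adv_prefix s (n + 2)) j) (P (n + 2)%nat))
    by (intros; apply adv_positions_in_FC; auto; lia).
  (* reflecting every other position makes the zigzag one-sided *)
  assert (Hbound : 2 * s * (s + 1) * ux <= (s - 1) * C).
  { apply (zigzag_cost_bound s t ux uy C (fun n => (-1) ^ n * fst (P (n + 2)%nat))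
             (fun n => snd (P (n + 2)%nat)) (fun n => path_cost P (n + 2))).
    - exact Hs.
    - lra.
    - apply Rdiv_le_0_compat; lra.
    - unfold ux, uy. field. lra.
    - intros n. replace (S n + 2)%nat with (S (n + 2)) by lia. 
      change (path_cost P (S (n + 2)))
        with (path_cost P (n + 2) + dist2 (P (n + 2)%nat) (P (S (n + 2)))).
      pose proof (dist2_ge_inner ((-1) ^ n * ux) uy (P (n + 2)%nat) (P (S (n + 2))))
        as Hinner.
      replace (((-1) ^ n * ux) ^ 2 + uy ^ 2) with (((-1) ^ n) ^ 2 * ux ^ 2 + uy ^ 2) in Hinner
        by ring.
      rewrite sign_sq in Hinner. specialize (Hinner ltac:(lra)).
      simpl pow. nra.
    - intros n. destruct (Hfc n (n + 2)%nat (le_n _)) as [_ Hfar].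
      replace (n + 2)%nat with (S (S n)) in Hfar |- * by lia.
      rewrite adv_prefix_Xc in Hfar by lia.
      apply Rabs_le_between in Hfar. simpl pow in Hfar.
      fold t in Hfar. simpl pow. destruct (sign_cases n) as [E|E]; rewrite E in *; lra.
    - intros n. apply (Hfc n (n + 2)%nat (le_n _)).
    - exact Hcost. }
  unfold ux in Hbound.
  apply (Rmult_le_reg_l ((s - 1) / W)); [apply Rdiv_lt_0_compat; lra|].
  replace ((s - 1) / W * (C * W)) with ((s - 1) * C) by (field; lra). lra.
Qed.

Definition zigzag_ratio (s t : R) : R :=
  2 * s * (s + 1)
  / (sqrt ((s - 1) ^ 2 + ((s + 1) * t) ^ 2) * sqrt ((s - 1) ^ 2 + ((s + 1) / t) ^ 2)).

Lemma zigzag_ratio_le_1 (s t : R) : 0 < t -> s <= 1 -> zigzag_ratio s t <= 1.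
Proof.
  intros Ht Hs. unfold zigzag_ratio.
  set (W := sqrt ((s - 1) ^ 2 + ((s + 1) * t) ^ 2)).
  set (K := sqrt ((s - 1) ^ 2 + ((s + 1) / t) ^ 2)).
  assert (Hcs : (s - 1) ^ 2 + (s + 1) ^ 2 <= W * K).
  { pose proof (sqrt_cauchy (s - 1) ((s + 1) * t) (s - 1) ((s + 1) / t)) as H.
    unfold Rsqr in H. unfold W, K.
    replace ((s - 1) ^ 2 + (s + 1) ^ 2)
      with ((s - 1) * (s - 1) + (s + 1) * t * ((s + 1) / t)) by (field; lra).
    replace ((s - 1) ^ 2 + ((s + 1) * t) ^ 2)
      with ((s - 1) * (s - 1) + (s + 1) * t * ((s + 1) * t)) by ring.
    replace ((s - 1) ^ 2 + ((s + 1) / t) ^ 2)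
      with ((s - 1) * (s - 1) + (s + 1) / t * ((s + 1) / t)) by ring.
    exact H. }
  apply Rle_div_l; nra.
Qed.

Lemma sq_combo_pos (s x y : R) : 0 < x -> 0 < y -> 0 < (s - 1) ^ 2 * x + (s + 1) ^ 2 * y.
Proof.
  intros Hx Hy.
  assert (0 <= (s - 1) ^ 2 * x) by (apply Rmult_le_pos; [apply pow2_ge_0 | lra]).
  assert (0 <= (s + 1) ^ 2 * y) by (apply Rmult_le_pos; [apply pow2_ge_0 | lra]).
  destruct (Rle_dec 0 s); [assert (1 <= (s + 1) ^ 2) | assert (1 <= (s - 1) ^ 2)]; nra.
Qed.

Lemma rho_eq_zigzag_ratio (alpha s : R) :
  0 < alpha < PI / 2 ->
  s * (1 + s) * sqrt (1 - cos (4 * alpha))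
    / sqrt (2 * (1 + s ^ 4) - 4 * s ^ 2 * cos (4 * alpha))
  = zigzag_ratio s (tan alpha).
Proof.
  intros [Ha0 Ha1].
  assert (Hsn : 0 < sin alpha) by (apply sin_gt_0; lra).
  assert (Hcs : 0 < cos alpha) by (apply cos_gt_0; lra).
  assert (Hpyth : sin alpha ^ 2 = 1 - cos alpha ^ 2)
    by (pose proof (sin2_cos2 alpha) as H; unfold Rsqr in H; lra).
  assert (Hc4 : cos (4 * alpha) = 1 - 8 * sin alpha ^ 2 * cos alpha ^ 2).
  { replace (4 * alpha) with (2 * (2 * alpha)) by ring. rewrite cos_2a_sin, sin_2a. ring. }
  unfold zigzag_ratio, tan. rewrite Hc4.
  set (sn := sin alpha) in *. set (cs := cos alpha) in *.
  set (P1 := (s - 1) ^ 2 * cs ^ 2 + (s + 1) ^ 2 * sn ^ 2).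
  set (P2 := (s - 1) ^ 2 * sn ^ 2 + (s + 1) ^ 2 * cs ^ 2).
  assert (HP1 : 0 < P1) by (apply sq_combo_pos; apply pow_lt; lra).
  assert (HP2 : 0 < P2) by (apply sq_combo_pos; apply pow_lt; lra).
  replace (1 - (1 - 8 * sn ^ 2 * cs ^ 2)) with (2 * (2 * sn * cs) ^ 2) by ring.
  replace (2 * (1 + s ^ 4) - 4 * s ^ 2 * (1 - 8 * sn ^ 2 * cs ^ 2)) with (2 * (P1 * P2))
    by (unfold P1, P2; rewrite Hpyth; ring).
  replace ((s - 1) ^ 2 + ((s + 1) * (sn / cs)) ^ 2) with (P1 / cs ^ 2) by (unfold P1; field; lra).
  replace ((s - 1) ^ 2 + ((s + 1) / (sn / cs)) ^ 2) with (P2 / sn ^ 2) by (unfold P2; field; lra).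
  rewrite (sqrt_mult_alt 2 ((2 * sn * cs) ^ 2)), sqrt_pow2 by nra.
  rewrite (sqrt_mult_alt 2 (P1 * P2)), (sqrt_mult_alt P1 P2) by lra.
  rewrite (sqrt_div_alt P1), (sqrt_div_alt P2), !sqrt_pow2 by nra.
  pose proof (sqrt_lt_R0 2 ltac:(lra)). pose proof (sqrt_lt_R0 P1 HP1).
  pose proof (sqrt_lt_R0 P2 HP2).
  field. repeat split; lra.
Qed.

Lemma Rbar_le_Lub_Rbar (E : R -> Prop) (x : R) :
  (forall M, (forall r, E r -> r <= M) -> x <= M) -> Rbar_le x (Lub_Rbar E).
Proof.
  intros H. destruct (Lub_Rbar_correct E) as [Hub _]. revert Hub.
  destruct (Lub_Rbar E) as [M| |]; simpl; intros Hub.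
  - apply H. exact Hub.
  - trivial.
  - assert (x <= x - 1) by (apply H; intros r Hr; destruct (Hub r Hr)). lra.
Qed.

Definition adv_ratios (alpha : R) (alg : online_alg) (s r : R) : Prop :=
  exists n : nat, (1 <= n)%nat /\ 0 < OPT alpha (adv_prefix s n) /\
    r = ALG_cost alg (adv_prefix s n) / OPT alpha (adv_prefix s n).

Lemma adv_ratios_sup_ge (alpha : R) (alg : online_alg) (s : R) :
  0 < tan alpha -> valid_alg alpha alg ->
  Rbar_le (zigzag_ratio s (tan alpha)) (Lub_Rbar (adv_ratios alpha alg s)).
Proof.
  intros Ht Hv. apply Rbar_le_Lub_Rbar. intros M HM.
  assert (Hcost : forall n, (1 <= n)%nat ->
    path_cost (adv_positions alg s) n <= M * OPT alpha (adv_prefix s n)).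
  { intros n Hn. pose proof (OPT_adv_prefix_pos alpha alg s n Ht Hv Hn) as HO.
    rewrite <- ALG_cost_adv_prefix. apply Rle_div_l; [exact HO|].
    apply HM. exists n. auto. }
  assert (HM1 : 1 <= M).
  { pose proof (OPT_adv_prefix_pos alpha alg s 1 Ht Hv (le_n 1)) as HO.
    pose proof (OPT_le_ALG_cost alpha alg (adv_prefix s 1) Hv) as HOA.
    pose proof (Hcost 1%nat (le_n 1)) as HA. rewrite <- ALG_cost_adv_prefix in HA. nra. }
  destruct (Rle_dec s 1) as [Hs|Hs].
  { pose proof (zigzag_ratio_le_1 s (tan alpha) Ht Hs). lra. }
  set (K := sqrt ((s - 1) ^ 2 + ((s + 1) / tan alpha) ^ 2)).
  set (W := sqrt ((s - 1) ^ 2 + ((s + 1) * tan alpha) ^ 2)).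
  assert (HK : 0 < K) by (apply sqrt_lt_R0; nra).
  assert (HW : 0 < W) by (apply sqrt_lt_R0; nra).
  assert (Hlow : 2 * s * (s + 1) <= M * K * W).
  { apply (adv_cost_lower_bound alpha alg s (M * K) Ht Hv ltac:(lra)). intros n.
    eapply Rle_trans; [apply Hcost; lia|].
    pose proof (OPT_adv_prefix_le alpha s n Ht ltac:(lra)). fold K in H.
    apply Rmult_le_compat_l with (r := M) in H; lra. }
  unfold zigzag_ratio. fold K W. apply Rle_div_l; nra.
Qed.

Theorem theorem4 (alpha : R) (alg : online_alg) :
  0 < alpha <= PI / 4 ->
  valid_alg alpha alg ->
  Rbar_le (Finite (rho_star alpha)) (comp_ratio alpha alg) /\
  Rbar_le (Finite (rho_star alpha))
    (Lub_Rbar (fun r => exists n : nat, (1 <= n)%nat /\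
       0 < OPT alpha (adv_prefix (s_star alpha) n) /\
       r = ALG_cost alg (adv_prefix (s_star alpha) n)
           / OPT alpha (adv_prefix (s_star alpha) n))).
Proof.
  intros Ha Hv.
  assert (Ha' : 0 < alpha < PI / 2) by (pose proof PI_RGT_0; lra).
  assert (Ht : 0 < tan alpha).
  { unfold tan. apply Rdiv_lt_0_compat; [apply sin_gt_0 | apply cos_gt_0]; lra. }
  assert (Hadv : Rbar_le (rho_star alpha) (Lub_Rbar (adv_ratios alpha alg (s_star alpha)))).
  { unfold rho_star. rewrite rho_eq_zigzag_ratio by exact Ha'. apply adv_ratios_sup_ge; assumption. }
  split; [| exact Hadv].
  eapply Rbar_le_trans; [exact Hadv|].
  refine (is_lub_Rbar_subset _ _ _ _ _ (Lub_Rbar_correct _) (Lub_Rbar_correct _)).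
  intros r [n [Hn [HO ->]]]. exists (adv_prefix (s_star alpha) n).
  rewrite adv_prefix_length. auto.
Qed.
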